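(* Let $\Lambda$ be an abelian group and $\mathrm{Coc}=\{c:V\to\prod_{\mathbf{Q}_2}\Lambda:\ c_{vw}=c_v\cdot c_w^v\ \forall v,w\in V\}$, where $c_w^v(x)=c_w(v^{-1}x)$. Then: (1) with the pointwise product $(c\cdot d)_v(x)=c_v(x)d_v(x)$, $\mathrm{Coc}$ is an abelian group; (2) for each $\zeta\in\Lambda$, $s(\zeta)_v(x)=\zeta^{\log_2(v'(v^{-1}x))}$ defines an element of $\mathrm{Coc}$; (3) for every $c\in\mathrm{Coc}$ there exist $\zeta\in\Lambda$ and $f\in\prod_{\mathbf{Q}_2}\Lambda$ with $c_v=s(\zeta)_v\cdot f(f^v)^{-1}$ for all $v\in V$, and the pair $(\zeta,f)$ is unique up to multiplying $f$ by a constant map; (4) the assignment $c\mapsto(\zeta,f)$ is a group isomorphism from $\mathrm{Coc}$ onto $\Lambda\times\big(\prod_{\mathbf{Q}_2}\Lambda\big)/\Lambda$ (with $\Lambda$ embedded as constant maps).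
   Context: Cantor space $\mathfrak C=\{0,1\}^{\mathbf N}$; $C_m=\{m\cdot x\}$. Thompson's group $V$: homeomorphisms $v$ with $v(m_kx)=m'_kx$ for partitions $\mathfrak C=\bigsqcup C_{m_k}=\bigsqcup C_{m'_k}$; slope $v'(x)=2^{|m_k|-|m'_k|}$ on $C_{m_k}$. $\mathbf{Q}_2\subset\mathfrak C$: eventually-zero sequences (a $V$-invariant set). For $f\in\prod_{\mathbf{Q}_2}\Lambda$, $f^v(x)=f(v^{-1}x)$. *)

(* (abelian group Lambda = zmodType, written additively). *)
From mathcomp Require Import all_boot all_order all_algebra.
From Stdlib Require Import ClassicalEpsilon.
Set Implicit Arguments. Unset Strict Implicit. Unset Printing Implicit Defensive.
Import GRing.Theory.
Local Open Scope ring_scope.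

Definition cantor := nat -> bool.

Definition prepend (m : seq bool) (x : cantor) : cantor :=
  fun n => if (n < size m)%N then nth false m n else x (n - size m)%N.

Definition inCyl (m : seq bool) (x : cantor) : Prop :=
  forall i, (i < size m)%N -> x i = nth false m i.

Definition isPartition (ms : seq (seq bool)) : Prop :=
  forall x : cantor, exists! k : nat, (k < size ms)%N /\ inCyl (nth [::] ms k) x.

(* Thompson's group V, as a set of maps of Cantor space:
   v (m_k x) = m'_k x for two partitions (m_k), (m'_k). *)
Definition inV (v : cantor -> cantor) : Prop :=
  exists ps : seq (seq bool * seq bool),
    isPartition (map fst ps) /\ isPartition (map snd ps) /\
    forall k, (k < size ps)%N -> forall y,
      v (prepend (nth ([::], [::]) ps k).1 y) = prepend (nth ([::], [::]) ps k).2 y.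

(* log_2 of the slope v'(x): on C_m with v(m y) = m' y, it is |m| - |m'|. *)
Definition logslope (v : cantor -> cantor) (x : cantor) : int :=
  epsilon (inhabits 0%R) (fun k : int => exists m m' : seq bool,
    inCyl m x /\ (forall y, v (prepend m y) = prepend m' y) /\
    k = (size m)%:Z - (size m')%:Z).

(* inverse map (well defined on bijections, e.g. elements of V) *)
Definition vinv (v : cantor -> cantor) (y : cantor) : cantor :=
  epsilon (inhabits y) (fun x => v x = y).

Definition isQ2 (x : cantor) : Prop := exists N, forall n, (N <= n)%N -> x n = false.
Definition Q2 := {x : cantor | isQ2 x}.

(* action of a map on Q_2 (for g in V, g preserves Q_2, so the fallback
   branch is never used) *)
Definition actQ (g : cantor -> cantor) (x : Q2) : Q2 :=
  match excluded_middle_informative (isQ2 (g (proj1_sig x))) with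
  | left p => exist _ (g (proj1_sig x)) p
  | right _ => x
  end.

Section Coc.
Variable L : zmodType.

Definition cochain := (cantor -> cantor) -> Q2 -> L.

Definition twist (v : cantor -> cantor) (f : Q2 -> L) : Q2 -> L :=
  fun x => f (actQ (vinv v) x).

(* Coc: c_{vw} = c_v . c_w^v for v, w in V; c is only defined on V, so we
   normalise c_v = 0 for v outside V. *)
Definition Coc (c : cochain) : Prop :=
  (forall v w, inV v -> inV w -> c (v \o w) = (fun x => c v x + twist v (c w) x))
  /\ (forall v, ~ inV v -> c v = (fun _ => 0)).

Definition cadd (c d : cochain) : cochain := fun v x => c v x + d v x.
Definition copp (c : cochain) : cochain := fun v x => - c v x.
Definition czero : cochain := fun _ _ => 0.

Definition s (zeta : L) : cochain := fun v x =>
  if excluded_middle_informative (inV v)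
  then zeta *~ logslope v (proj1_sig (actQ (vinv v) x))
  else 0.

Definition rep (c : cochain) (zeta : L) (f : Q2 -> L) : Prop :=
  forall v, inV v -> c v = (fun x => s zeta v x + f x - twist v f x).

(* equality in L x (prod_{Q_2} L)/L, L embedded as constant maps *)
Definition eqmod (p q : L * (Q2 -> L)) : Prop :=
  p.1 = q.1 /\ exists a : L, q.2 = (fun x => p.2 x + a).

Definition padd (p q : L * (Q2 -> L)) : L * (Q2 -> L) :=
  (p.1 + q.1, fun x => p.2 x + q.2 x).

End Coc.

(* Thompson's group V is generated by the transpositions [tr a b] exchanging two
   disjoint cylinders C_a and C_b: composing v with transpositions merges two
   sibling pieces of v, so induction on the number of pieces shows that a cocycle
   vanishing on all transpositions vanishes on V.

   At a point outside C_a and C_b the value of c_(tr a b) is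
   zero: splitting the swap into the swaps of the two halves of C_a and C_b adds
   the values, and conjugating by transpositions shows that all these values are
   equal.  By the same splitting, c_(tr a b)(a t) only depends on the pair of
   words (a r, b r) with t = r 000...; on such pairs it is antisymmetric and
   additive along disjoint triples, hence a difference P(a r) - P(b r) of a
   potential.  The drift P(a) - P(a 0) is a constant zeta, so
   f(a 000...) := P(a) + zeta |a| is well defined, and c - s(zeta) f (f^v)^-1
   vanishes on transpositions, hence on V.  Conversely a coboundary
   s(zeta) f (f^v)^-1 vanishing on V has zeta = 0 and f constant, as its values
   at a few transpositions show; this gives uniqueness, and (4) follows by
   linearity. *)

From mathcomp Require Import all_boot all_order all_algebra zify.
From Stdlib Require Import ClassicalEpsilon FunctionalExtensionality ProofIrrelevance Classical.
Import GRing.Theory.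

Definition word := seq bool.

Section CantorSpace.
Implicit Types (a b c h r s : word) (x y : cantor) (p q : Q2).

Definition zero_seq : cantor := fun _ => false.

Definition shift (x : cantor) (n : nat) : cantor := fun i => x (i + n).

Lemma inCylP a x : inCyl a x <-> mkseq x (size a) = a.
Proof.
split=> [H|<- i]; last by rewrite size_mkseq => Hi; rewrite nth_mkseq.
apply: (@eq_from_nth _ false); first by rewrite size_mkseq.
by move=> i; rewrite size_mkseq => Hi; rewrite nth_mkseq // H.
Qed.

Lemma inCyl_mkseq x n : inCyl (mkseq x n) x.
Proof. by apply/inCylP; rewrite size_mkseq. Qed.

Lemma inCyl_prepend a y : inCyl a (prepend a y).
Proof. by move=> i Hi; rewrite /prepend Hi. Qed.

Lemma mkseq_prepend a y : mkseq (prepend a y) (size a) = a.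
Proof. exact/inCylP/inCyl_prepend. Qed.

Lemma shift_prepend a y : shift (prepend a y) (size a) = y.
Proof.
by apply: functional_extensionality => i; rewrite /shift /prepend ltnNge leq_addl addnK.
Qed.

Lemma prepend_shift {a x} : inCyl a x -> prepend a (shift x (size a)) = x.
Proof.
move=> H; apply: functional_extensionality => i; rewrite /shift /prepend.
by case: ltnP => Hi; [rewrite H | rewrite subnK].
Qed.

Lemma prepend_nil y : prepend [::] y = y.
Proof. by apply: functional_extensionality => i; rewrite /prepend subn0. Qed.

Lemma prepend_cat a b y : prepend (a ++ b) y = prepend a (prepend b y).
Proof.
apply: functional_extensionality => i; rewrite /prepend size_cat nth_cat.
case: (ltnP i (size a)) => H; first by rewrite (leq_trans H) ?leq_addr.
by rewrite ltn_subLR // subnDA.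
Qed.

Lemma prepend_rcons a (b : bool) y : prepend (rcons a b) y = prepend a (prepend [:: b] y).
Proof. by rewrite -cats1 prepend_cat. Qed.

Lemma prepend_inj a : injective (prepend a).
Proof. by move=> y y' E; rewrite -(shift_prepend a y) E shift_prepend. Qed.

Lemma prepend_split_head a y : prepend a y = prepend (rcons a (y 0)) (shift y 1).
Proof.
rewrite prepend_rcons; congr prepend; apply: functional_extensionality => i.
by rewrite /prepend /shift; case: i => [|i] //=; rewrite subn1 addn1.
Qed.

Lemma prepend_word_inj {a b} : (forall y, prepend a y = prepend b y) -> a = b.
Proof.
move=> H.
have Hs : size a = size b.
  wlog Hab : a b H / (size a < size b).
    move=> W; case: (ltngtP (size a) (size b)) => // h; first exact: W.
    by apply/esym/W.
  pose y : cantor := fun _ => ~~ nth false b (size a).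
  have := congr1 (fun f => f (size a)) (H y).
  by rewrite /prepend ltnn Hab subnn /y; case: (nth false b (size a)).
apply: (@eq_from_nth _ false) => // i Hi.
by have := congr1 (fun f => f i) (H zero_seq); rewrite /prepend Hi -Hs Hi.
Qed.

Lemma prefix_mkseq x m n : (m <= n) -> prefix (mkseq x m) (mkseq x n).
Proof.
move=> H; rewrite prefixE size_mkseq; apply/eqP.
apply: (@eq_from_nth _ false); first by rewrite size_takel // size_mkseq.
move=> i; rewrite size_takel ?size_mkseq // => Hi.
by rewrite nth_take // !nth_mkseq // (leq_trans Hi).
Qed.

Lemma inCyl_prefix_le {a b x} :
  inCyl a x -> inCyl b x -> (size a <= size b) -> prefix a b.
Proof. by move=> /inCylP Ea /inCylP Eb /(prefix_mkseq x); rewrite Ea Eb. Qed.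

Lemma inCyl_prefix {a b x} : prefix a b -> inCyl b x -> inCyl a x.
Proof.
move=> /prefixP[r ->] H i Hi.
by rewrite H ?nth_cat ?Hi // size_cat (leq_trans Hi) ?leq_addr.
Qed.

Lemma prefix_eq_size {a b} : prefix a b -> size a = size b -> a = b.
Proof.
move=> /prefixP[r ->]; rewrite size_cat => /eqP.
by rewrite -{1}(addn0 (size a)) eqn_add2l eq_sym size_eq0 => /eqP ->; rewrite cats0.
Qed.

Lemma prefix_rcons_cases {c h} {b : bool} :
  prefix c (rcons h b) -> c = rcons h b \/ prefix c h.
Proof.
move=> H; case: (leqP (size c) (size h)) => Hs.
  by right; move: H; rewrite !prefixE -cats1 takel_cat.
left; apply: prefix_eq_size => //; apply/eqP.
by rewrite eqn_leq size_prefix // size_rcons.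
Qed.

Lemma prefix_rcons h (b : bool) : prefix h (rcons h b).
Proof. by rewrite -cats1 prefix_prefix. Qed.

Definition disj (a b : word) := ~~ prefix a b && ~~ prefix b a.

Lemma disjC a b : disj a b = disj b a.
Proof. by rewrite /disj andbC. Qed.

Lemma disj_irrefl a : disj a a = false.
Proof. by rewrite /disj prefix_refl. Qed.

Lemma disj_nil a : disj [::] a = false.
Proof. by rewrite /disj prefix0s. Qed.

Lemma not_disj {a b} : ~~ disj a b -> prefix a b \/ prefix b a.
Proof. by rewrite /disj negb_and !negbK => /orP. Qed.

Lemma inCyl_comparable {a b x} : inCyl a x -> inCyl b x -> ~~ disj a b.
Proof.
move=> Ha Hb; rewrite /disj negb_and !negbK.
case: (leqP (size a) (size b)) => H; first by rewrite (inCyl_prefix_le Ha Hb H).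
by rewrite (inCyl_prefix_le Hb Ha (ltnW H)) orbT.
Qed.

Lemma disj_inCyl {a b x} : disj a b -> inCyl a x -> ~ inCyl b x.
Proof. by move=> D Ha Hb; move: (inCyl_comparable Ha Hb); rewrite D. Qed.

Lemma disj_prepend {a b} y : disj a b -> ~ inCyl b (prepend a y).
Proof. by move=> D; exact: disj_inCyl D (inCyl_prepend a y). Qed.

Lemma common_of_not_disj {a b} : ~~ disj a b -> exists x, inCyl a x /\ inCyl b x.
Proof.
case/not_disj=> H; [exists (prepend b zero_seq) | exists (prepend a zero_seq)].
  by split; [apply: inCyl_prefix H _|]; apply: inCyl_prepend.
by split; [|apply: inCyl_prefix H _]; apply: inCyl_prepend.
Qed.

Lemma disj_cat {a b} r s : disj a b -> disj (a ++ r) (b ++ s).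
Proof.
move=> D; apply: contraTT D => /common_of_not_disj[x [Ha Hb]].
exact: inCyl_comparable (inCyl_prefix (prefix_prefix a r) Ha)
                        (inCyl_prefix (prefix_prefix b s) Hb).
Qed.

Lemma disj_catl {a b} r : disj a b -> disj (a ++ r) b.
Proof. by move=> /(disj_cat r [::]); rewrite cats0. Qed.

Lemma disj_rcons {a b} (i j : bool) : disj a b -> disj (rcons a i) (rcons b j).
Proof. by rewrite -!cats1; apply: disj_cat. Qed.

Lemma disj_rconsl {a b} (i : bool) : disj a b -> disj (rcons a i) b.
Proof. by rewrite -cats1; apply: disj_catl. Qed.

Lemma disj_nth {a b} i : (i < size a) -> (i < size b) -> nth false a i != nth false b i ->
  disj a b.
Proof.
move=> Ha Hb; apply: contraTT; rewrite negbK => /not_disj[]/prefixP[r ->].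
  by rewrite nth_cat Ha.
by rewrite nth_cat Hb.
Qed.

Lemma disj_prefixl {a a' b} : prefix a a' -> disj a b -> disj a' b.
Proof. by case/prefixP=> r ->; apply: disj_catl. Qed.

Lemma disj_sibling h (b : bool) : disj (rcons h b) (rcons h (~~ b)).
Proof.
apply/andP; split; apply/negP=> /prefix_eq_size; rewrite !size_rcons => /(_ erefl).
  by move/(congr1 (last false)); rewrite !last_rcons; case: b.
by move/(congr1 (last false)); rewrite !last_rcons; case: b.
Qed.

Lemma notin_prefix {a a' x} : prefix a a' -> ~ inCyl a x -> ~ inCyl a' x.
Proof. by move=> P Ha Ha'; apply/Ha/(inCyl_prefix P). Qed.

Record part (P : seq word) : Prop := Part {
  part_cover : forall x, exists2 m, m \in P & inCyl m x;
  part_uniq : uniq P;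
  part_disj : forall a b, a \in P -> b \in P -> a != b -> disj a b }.

#[global] Arguments part_cover {P}.
#[global] Arguments part_uniq {P}.
#[global] Arguments part_disj {P} _ [a b].

Lemma part_eq {P a b x} : part P -> a \in P -> b \in P -> inCyl a x -> inCyl b x -> a = b.
Proof.
move=> HP Ha Hb Hax Hbx; apply/eqP/negPn/negP => /(part_disj HP Ha Hb) D.
exact: disj_inCyl D Hax Hbx.
Qed.

Lemma part_of_isPartition P : isPartition P -> part P.
Proof.
move=> H.
have Hidx k l x : (k < size P) -> (l < size P) ->
    inCyl (nth [::] P k) x -> inCyl (nth [::] P l) x -> k = l.
  by move=> Hk Hl Hkx Hlx; have [j [_ U]] := H x; rewrite -(U k) ?(U l).
split.
- move=> x; have [k [[Hk Hx] _]] := H x.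
  by exists (nth [::] P k) => //; apply: mem_nth.
- apply/(uniqP [::]) => k l Hk Hl E.
  by apply: (Hidx k l _ Hk Hl (inCyl_prepend _ zero_seq)); rewrite E; apply: inCyl_prepend.
- move=> a b /(nthP [::])[k Hk <-] /(nthP [::])[l Hl <-].
  apply: contraNT => /common_of_not_disj[x [Hkx Hlx]].
  by rewrite (Hidx k l x Hk Hl Hkx Hlx).
Qed.

Lemma isPartition_of_part P : part P -> isPartition P.
Proof.
move=> HP x; have [m Hm Hx] := part_cover HP x.
exists (index m P); split; first by rewrite index_mem nth_index.
move=> l [Hl Hlx]; rewrite (part_eq HP Hm (mem_nth [::] Hl) Hx Hlx).
by rewrite index_uniq // (part_uniq HP).
Qed.

Fixpoint words n : seq word :=
  if n is n'.+1 then map (cons false) (words n') ++ map (cons true) (words n')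
  else [:: [::]].

Lemma mem_words n a : (a \in words n) = (size a == n).
Proof.
elim: n a => [|n IH] [|b a] //=; rewrite ?mem_cat ?inE //.
  by apply/negbTE/negP => /orP[] /mapP[].
rewrite eqSS -IH; apply/idP/idP.
  by case/orP => /mapP[c Hc [_ ->]].
by case: b => H; apply/orP; [right | left]; apply: map_f.
Qed.

Lemma part_words n : part (words n).
Proof.
split.
- move=> x; exists (mkseq x n); last exact: inCyl_mkseq.
  by rewrite mem_words size_mkseq.
- elim: n => //= n IH; rewrite cat_uniq !map_inj_uniq // ?IH /=; try by move=> ? ? [].
  by rewrite andbT; apply/hasPn => a /mapP[c _ ->]; apply/negP => /mapP[].
- move=> a b; rewrite !mem_words => /eqP Ha /eqP Hb; apply: contraNT.
  by case/not_disj=> /prefix_eq_size ->; rewrite ?Ha ?Hb.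
Qed.

Lemma vinvK {v} : bijective v -> cancel (vinv v) v.
Proof.
case=> g _ gK y; apply: (epsilon_spec (inhabits y) (fun x => v x = y)).
by exists (g y).
Qed.

Lemma vinvK' {v} : bijective v -> cancel v (vinv v).
Proof. by move=> Hv x; apply: (bij_inj Hv); rewrite vinvK. Qed.

Lemma vinv_comp {v w} : bijective v -> bijective w -> vinv (v \o w) =1 vinv w \o vinv v.
Proof.
move=> Hv Hw y; apply: (bij_inj (bij_comp Hv Hw)).
by rewrite (vinvK (bij_comp Hv Hw)) /= (vinvK Hw) (vinvK Hv).
Qed.

Definition maps_cyl (v : cantor -> cantor) a a' := forall y, v (prepend a y) = prepend a' y.

Definition cylmap (v : cantor -> cantor) a := exists a', maps_cyl v a a'.

Lemma maps_cyl_cat {v a a'} r : maps_cyl v a a' -> maps_cyl v (a ++ r) (a' ++ r).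
Proof. by move=> H y; rewrite !prepend_cat H. Qed.

Lemma disj_maps_cyl {v a b a' b'} : injective v -> disj a b ->
  maps_cyl v a a' -> maps_cyl v b b' -> disj a' b'.
Proof.
move=> Hv D Ha Hb; apply: contraTT D => /common_of_not_disj[x [Hax Hbx]].
have E : prepend a (shift x (size a')) = prepend b (shift x (size b')).
  by apply: Hv; rewrite Ha Hb !prepend_shift.
by apply/negP => /(disj_prepend (shift x (size a'))); rewrite E; apply; apply: inCyl_prepend.
Qed.

Definition piecewise v P := [/\ part P, bijective v & forall a, a \in P -> cylmap v a].

Lemma inV_of_piecewise {P v} : piecewise v P -> inV v.
Proof.
case=> HP Hv Hc; pose img a := epsilon (inhabits [::]) (maps_cyl v a).
have Himg a : a \in P -> maps_cyl v a (img a) by move/Hc; apply: epsilon_spec.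
have Himg_disj a b : a \in P -> b \in P -> a != b -> disj (img a) (img b).
  move=> Ha Hb Hab.
  exact: disj_maps_cyl (bij_inj Hv) (part_disj HP Ha Hb Hab) (Himg a Ha) (Himg b Hb).
exists [seq (a, img a) | a <- P]; rewrite -!map_comp map_id size_map; split; [|split].
- exact: isPartition_of_part.
- apply: isPartition_of_part; split.
  + move=> y; have [m Hm Hx] := part_cover HP (vinv v y); exists (img m); first exact: map_f.
    by rewrite -(vinvK Hv y) -(prepend_shift Hx) Himg //; apply: inCyl_prepend.
  + rewrite map_inj_in_uniq ?(part_uniq HP) // => a b Ha Hb /= E; apply/eqP/negPn/negP.
    by move/(Himg_disj a b Ha Hb); rewrite E disj_irrefl.
  + move=> _ _ /mapP[a Ha ->] /mapP[b Hb ->] Hab; apply: Himg_disj => //.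
    by apply: contraNneq Hab => ->.
- by move=> k Hk y; rewrite (nth_map [::]) //; apply/Himg/mem_nth.
Qed.

Lemma bijective_of_inj_surj {v : cantor -> cantor} :
  injective v -> (forall y, exists x, v x = y) -> bijective v.
Proof.
move=> Hi Hs; have vK : cancel (vinv v) v.
  by move=> y; apply: (epsilon_spec (inhabits y) (fun x => v x = y)).
by exists (vinv v) => // x; apply: Hi; rewrite vK.
Qed.

Lemma inV_bijective {v} : inV v -> bijective v.
Proof.
move=> [ps [Hdom [Hrng Hv]]].
pose a k := (nth ([::], [::]) ps k).1; pose b k := (nth ([::], [::]) ps k).2.
have Ea k : k < size ps -> nth [::] (map fst ps) k = a k.
  by move=> Hk; rewrite (nth_map ([::], [::])).
have Eb k : k < size ps -> nth [::] (map snd ps) k = b k.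
  by move=> Hk; rewrite (nth_map ([::], [::])).
have piece x : exists2 k, (k < size ps) & x = prepend (a k) (shift x (size (a k))).
  have [k [[Hk Hx] _]] := Hdom x; rewrite size_map in Hk.
  by exists k => //; rewrite prepend_shift // -Ea.
apply: bijective_of_inj_surj => [x x' E|y].
  have [k Hk Ex] := piece x; have [l Hl Ex'] := piece x'.
  move: E; rewrite Ex Ex' !Hv // -/(b k) -/(b l) => E.
  have [j [_ U]] := Hrng (prepend (b k) (shift x (size (a k)))).
  have Ekl : k = l.
    rewrite -(U k) ?(U l) ?size_map ?Eb //; last by split=> //; apply: inCyl_prepend.
    by split=> //; rewrite E; apply: inCyl_prepend.
  by move: E; rewrite Ex Ex' -Ekl => /prepend_inj ->.
have [k [[Hk Hy] _]] := Hrng y; rewrite size_map in Hk; rewrite Eb // in Hy.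
by exists (prepend (a k) (shift y (size (b k)))); rewrite Hv // prepend_shift.
Qed.

Lemma piecewise_of_inV {v} : inV v -> exists P, piecewise v P.
Proof.
move=> HV; have Hb := inV_bijective HV; case: HV => ps [Hdom [_ Hv]].
exists (map fst ps); split=> //; first exact: part_of_isPartition.
move=> a /(nthP [::])[k]; rewrite size_map => Hk <-.
by exists (nth ([::], [::]) ps k).2 => y; rewrite (nth_map ([::], [::])) // Hv.
Qed.

Definition cylmap_from (v : cantor -> cantor) N := forall a, (N <= size a) -> cylmap v a.

Lemma inV_cylmap_from {v} : inV v -> exists N, cylmap_from v N.
Proof.
case/piecewise_of_inV=> P [HP _ Hc]; exists (\max_(m <- P) size m) => a Ha.
have [m Hm Hx] := part_cover HP (prepend a zero_seq).
have /prefixP[r ->] : prefix m a.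
  apply: inCyl_prefix_le Hx (inCyl_prepend _ _) _.
  exact: leq_trans (leq_bigmax_seq _ Hm isT) Ha.
by have [m' Hm'] := Hc m Hm; exists (m' ++ r); apply: maps_cyl_cat.
Qed.

Lemma inV_of_cylmap_from {v N} : bijective v -> cylmap_from v N -> inV v.
Proof.
move=> Hv HN; apply: (@inV_of_piecewise (words N)); split=> // [|a].
  exact: part_words.
by rewrite mem_words => /eqP Ha; apply: HN; rewrite Ha.
Qed.

Lemma cylmap_from_comp {v w Nv Nw a} :
  cylmap_from v Nv -> cylmap_from w Nw -> Nw + Nv <= size a ->
  exists a' a'', maps_cyl w a a' /\ maps_cyl v a' a''.
Proof.
move=> Hv Hw Ha; rewrite -(cat_take_drop Nw a).
have [a1 Ha1] : cylmap w (take Nw a) by apply: Hw; rewrite size_take_min; lia.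
have [a2 Ha2] : cylmap v (a1 ++ drop Nw a) by apply: Hv; rewrite size_cat size_drop; lia.
by exists (a1 ++ drop Nw a), a2; split=> //; apply: maps_cyl_cat.
Qed.

Lemma inV_comp {v w} : inV v -> inV w -> inV (v \o w).
Proof.
move=> Hv Hw; have [Nv Dv] := inV_cylmap_from Hv; have [Nw Dw] := inV_cylmap_from Hw.
apply: (@inV_of_cylmap_from _ (Nw + Nv)).
  exact: bij_comp (inV_bijective Hv) (inV_bijective Hw).
move=> a Ha.
have [a' [a'' [Ha' Ha'']]] := cylmap_from_comp Dv Dw Ha.
by exists a'' => y /=; rewrite Ha' Ha''.
Qed.

Lemma inV_id : inV id.
Proof.
apply: (@inV_of_cylmap_from _ 0 (Bijective (g := id) (fun=> erefl) (fun=> erefl))) => a _.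
by exists a.
Qed.

Lemma cylmap_from_local {v N} x : cylmap_from v N -> exists m m', inCyl m x /\ maps_cyl v m m'.
Proof.
move=> HN; have [m' Hm'] := HN (mkseq x N) (eq_leq (esym (size_mkseq x N))).
by exists (mkseq x N), m'; split=> //; apply: inCyl_mkseq.
Qed.

Lemma isQ2_prepend a y : isQ2 (prepend a y) <-> isQ2 y.
Proof.
split=> [[N HN]|[N HN]].
  by exists N => n Hn; have := HN (n + size a); rewrite /prepend ltnNge leq_addl addnK; apply; lia.
exists (N + size a) => n Hn; rewrite /prepend ltnNge (_ : size a <= n); last lia.
by apply: HN; lia.
Qed.

Lemma inV_isQ2 {v} x : inV v -> isQ2 (v x) <-> isQ2 x.
Proof.
case/inV_cylmap_from=> N /(cylmap_from_local x)[m [m' [Hm Hv]]].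
by rewrite -(prepend_shift Hm) Hv !isQ2_prepend.
Qed.

Lemma Q2_eq p q : sval p = sval q -> p = q.
Proof. by case: p q => x hx [y hy] /= E; subst y; rewrite (proof_irrelevance _ hx hy). Qed.

Lemma actQ_val g p : isQ2 (g (sval p)) -> sval (actQ g p) = g (sval p).
Proof. by rewrite /actQ; case: excluded_middle_informative. Qed.

Lemma actQ_inV {v} p : inV v -> sval (actQ v p) = v (sval p).
Proof. by move=> Hv; apply/actQ_val/(inV_isQ2 _ Hv)/(svalP p). Qed.

Lemma actQ_vinv {v} p : inV v -> sval (actQ (vinv v) p) = vinv v (sval p).
Proof.
move=> Hv; apply/actQ_val/(inV_isQ2 _ Hv).
by rewrite (vinvK (inV_bijective Hv)); apply: svalP.
Qed.

Lemma actQ_vinvK {v} p : inV v -> actQ (vinv v) (actQ v p) = p.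
Proof.
by move=> Hv; apply: Q2_eq; rewrite actQ_vinv // actQ_inV // vinvK' //; apply: inV_bijective.
Qed.

Lemma actQ_vinv_comp {v w} p : inV v -> inV w ->
  actQ (vinv (v \o w)) p = actQ (vinv w) (actQ (vinv v) p).
Proof.
move=> Hv Hw; apply: Q2_eq; rewrite (actQ_vinv _ (inV_comp Hv Hw)) !actQ_vinv //.
exact: (vinv_comp (inV_bijective Hv) (inV_bijective Hw)).
Qed.

Lemma slope_maps_cyl_uniq {v x m1 m1' m2 m2'} :
  inCyl m1 x -> maps_cyl v m1 m1' -> inCyl m2 x -> maps_cyl v m2 m2' ->
  ((size m1)%:Z - (size m1')%:Z = (size m2)%:Z - (size m2')%:Z)%R.
Proof.
wlog Hle : m1 m1' m2 m2' / (size m1 <= size m2).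
  move=> W H1 H1' H2 H2'; case: (leqP (size m1) (size m2)) => h; first exact: W.
  by apply/esym/W => //; apply: ltnW.
move=> H1 H1' H2 H2'; case/prefixP: (inCyl_prefix_le H1 H2 Hle) => r Er.
have -> : m2' = m1' ++ r.
  by apply: prepend_word_inj => y; rewrite -H2' Er (prepend_cat m1 r) H1' prepend_cat.
by rewrite Er !size_cat; lia.
Qed.

Lemma logslope_maps_cyl {v x m m'} : inCyl m x -> maps_cyl v m m' ->
  logslope v x = ((size m)%:Z - (size m')%:Z)%R.
Proof.
move=> Hm Hv; rewrite /logslope; set P := fun k : int => _.
have [|m1 [m1' [H1 [H1' ->]]]] := epsilon_spec (inhabits 0%R) P.
  by exists ((size m)%:Z - (size m')%:Z)%R, m, m'.
exact: slope_maps_cyl_uniq H1 H1' Hm Hv.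
Qed.

Lemma logslope_comp {v w} x : inV v -> inV w ->
  logslope (v \o w) x = (logslope v (w x) + logslope w x)%R.
Proof.
case/inV_cylmap_from=> Nv Dv /inV_cylmap_from[Nw Dw].
have [n' [n'' [Hw Hv]]] := cylmap_from_comp Dv Dw (eq_leq (esym (size_mkseq x (Nw + Nv)))).
have Hn := inCyl_mkseq x (Nw + Nv); have Hwx : inCyl n' (w x).
  by rewrite -(prepend_shift Hn) Hw; apply: inCyl_prepend.
rewrite (logslope_maps_cyl Hn (v := v \o w) (m' := n'')) => [|y /=]; last by rewrite Hw Hv.
by rewrite (logslope_maps_cyl Hn Hw) (logslope_maps_cyl Hwx Hv); lia.
Qed.

Definition tr a b x : cantor :=
  if mkseq x (size a) == a then prepend b (shift x (size a))
  else if mkseq x (size b) == b then prepend a (shift x (size b)) else x.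

(* Allowing [a = b], where [tr a a = id], spares case distinctions below. *)
Definition compat a b := (a == b) || disj a b.

Lemma compat_refl a : compat a a.
Proof. by rewrite /compat eqxx. Qed.

Lemma compatC a b : compat a b = compat b a.
Proof. by rewrite /compat eq_sym disjC. Qed.

Lemma compat_disj {a b} : disj a b -> compat a b.
Proof. by move=> D; rewrite /compat D orbT. Qed.

Lemma disj_eq_size {a b} : size a = size b -> a != b -> disj a b.
Proof.
move=> E; apply: contraNT => /not_disj[] /prefix_eq_size; first by move/(_ E) ->.
by move/(_ (esym E)) ->.
Qed.

Lemma compat_eq_size {a b} : size a = size b -> compat a b.
Proof.
by move=> E; case: (eqVneq a b) => [->|N]; [apply: compat_refl | apply/compat_disj/disj_eq_size].
Qed.

Lemma tr_id a : tr a a = id.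
Proof.
apply: functional_extensionality => x; rewrite /tr.
by case: eqP => // /inCylP Hx; rewrite prepend_shift.
Qed.

Lemma tr_prependl a b y : tr a b (prepend a y) = prepend b y.
Proof. by rewrite /tr mkseq_prepend eqxx shift_prepend. Qed.

Lemma tr_out {a b x} : ~ inCyl a x -> ~ inCyl b x -> tr a b x = x.
Proof. by move=> Ha Hb; rewrite /tr; do 2!case: eqP => [/inCylP //|_]. Qed.

Lemma tr_prependr {a b} y : compat a b -> tr a b (prepend b y) = prepend a y.
Proof.
case/orP=> [/eqP ->|D]; first by rewrite tr_prependl.
rewrite /tr mkseq_prepend eqxx shift_prepend.
by case: eqP => // /inCylP; rewrite disjC in D; move/(disj_prepend y D).
Qed.

Lemma tr_comm {a b} : compat a b -> tr a b = tr b a.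
Proof.
move=> C; apply: functional_extensionality => x.
case: (boolP (mkseq x (size a) == a)) => [/eqP/inCylP Ha|/eqP Ha].
  by rewrite -(prepend_shift Ha) tr_prependl tr_prependr // compatC.
case: (boolP (mkseq x (size b) == b)) => [/eqP/inCylP Hb|/eqP Hb].
  by rewrite -(prepend_shift Hb) tr_prependl tr_prependr.
by rewrite !tr_out // => /inCylP.
Qed.

Lemma tr_invol {a b} : compat a b -> involutive (tr a b).
Proof.
move=> C x; case: (boolP (mkseq x (size a) == a)) => [/eqP/inCylP Ha|/eqP Ha].
  by rewrite -(prepend_shift Ha) tr_prependl tr_prependr.
case: (boolP (mkseq x (size b) == b)) => [/eqP/inCylP Hb|/eqP Hb].
  by rewrite -(prepend_shift Hb) tr_prependr // tr_prependl.
by rewrite !tr_out // => /inCylP.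
Qed.

Lemma tr_bijective {a b} : compat a b -> bijective (tr a b).
Proof. by move=> C; exists (tr a b); apply: tr_invol. Qed.

Lemma tr_maps_cyl_out {a b c} : disj c a -> disj c b -> maps_cyl (tr a b) c c.
Proof. by move=> Da Db y; rewrite tr_out //; apply: disj_prepend. Qed.

Lemma tr_cylmap {a b c} : compat a b -> (prefix a c \/ disj c a) -> (prefix b c \/ disj c b) ->
  cylmap (tr a b) c.
Proof.
move=> C [/prefixP[r ->] _|Da]; first by exists (b ++ r) => y; rewrite !prepend_cat tr_prependl.
case=> [/prefixP[r ->]|Db]; last by exists c; apply: tr_maps_cyl_out.
by exists (a ++ r) => y; rewrite !prepend_cat tr_prependr.
Qed.

Lemma prefix_or_disj {a c} : (size a <= size c) -> prefix a c \/ disj c a.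
Proof.
move=> H; case D: (disj c a); [by right | left].
case/not_disj: (negbT D) => // P; rewrite (prefix_eq_size P) ?prefix_refl //.
by apply/eqP; rewrite eqn_leq size_prefix.
Qed.

Lemma tr_inV {a b} : compat a b -> inV (tr a b).
Proof.
move=> C; apply: (@inV_of_cylmap_from _ (size a + size b)); first exact: tr_bijective.
move=> c Hc; apply: tr_cylmap => //; apply: prefix_or_disj; lia.
Qed.

Lemma vinv_tr {a b} : compat a b -> vinv (tr a b) = tr a b.
Proof.
move=> C; apply: functional_extensionality => y.
by apply: (bij_inj (tr_bijective C)); rewrite (vinvK (tr_bijective C)) tr_invol.
Qed.

Lemma tr_eq_of_maps {a b} (g : cantor -> cantor) : disj a b ->
  maps_cyl g a b -> maps_cyl g b a -> (forall x, ~ inCyl a x -> ~ inCyl b x -> g x = x) ->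
  g = tr a b.
Proof.
move=> D Ha Hb Ho; apply: functional_extensionality => x.
case: (boolP (mkseq x (size a) == a)) => [/eqP/inCylP Hx|/eqP Hx].
  by rewrite -(prepend_shift Hx) Ha tr_prependl.
case: (boolP (mkseq x (size b) == b)) => [/eqP/inCylP Hy|/eqP Hy].
  by rewrite -(prepend_shift Hy) Hb tr_prependr ?compat_disj.
by rewrite Ho ?tr_out // => /inCylP.
Qed.

Lemma tr_conj {a b z} : disj a b -> disj a z -> disj b z ->
  tr a z = tr b z \o (tr a b \o tr b z).
Proof.
move=> Dab Daz Dbz; have Cbz := compat_disj Dbz; have Cab := compat_disj Dab.
have Dzb : disj z b by rewrite disjC.
apply/esym/tr_eq_of_maps => // [y|y|x Ha Hz] /=.
- by rewrite (tr_out (disj_prepend y Dab) (disj_prepend y Daz)) !tr_prependl.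
- rewrite (tr_prependr y Cbz) (tr_prependr y Cab).
  by rewrite (tr_out (disj_prepend y Dab) (disj_prepend y Daz)).
case: (boolP (mkseq x (size b) == b)) => [/eqP/inCylP Hb|/eqP Hb].
  have Dza : disj z a by rewrite disjC.
  set t := shift x (size b); rewrite -(prepend_shift Hb) -/t tr_prependl.
  by rewrite (tr_out (disj_prepend t Dza) (disj_prepend t Dzb)) (tr_prependr t Cbz).
by rewrite !tr_out // => /inCylP.
Qed.

Lemma tr_split {a b} : disj a b ->
  tr a b = tr (rcons a false) (rcons b false) \o tr (rcons a true) (rcons b true).
Proof.
move=> D; have D' : disj b a by rewrite disjC.
have Sa : disj (rcons a true) (rcons a false) := disj_sibling a true.
have Sb : disj (rcons b false) (rcons b true) := disj_sibling b false.
have Sa' : disj (rcons a false) (rcons a true) := disj_sibling a false.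
have Sb' : disj (rcons b true) (rcons b false) := disj_sibling b true.
apply/esym/tr_eq_of_maps => // [y|y|x Ha Hb] /=.
- rewrite (prepend_split_head a) (prepend_split_head b); case: (y 0).
    by rewrite tr_prependl (tr_maps_cyl_out (disj_rcons true false D') Sb').
  by rewrite (tr_maps_cyl_out Sa' (disj_rcons false true D)) tr_prependl.
- rewrite (prepend_split_head a) (prepend_split_head b); case: (y 0).
    rewrite tr_prependr ?compat_disj ?disj_rcons //.
    by rewrite (tr_maps_cyl_out Sa (disj_rcons true false D)).
  by rewrite (tr_maps_cyl_out (disj_rcons false true D') Sb) tr_prependr ?compat_disj ?disj_rcons.
by rewrite !tr_out //; apply: notin_prefix (prefix_rcons _ _) _.
Qed.

Lemma nil_of_cover a : (forall x, inCyl a x) -> a = [::].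
Proof.
case: a => // b a /(_ (prepend [:: ~~ b] zero_seq) 0 isT).
by rewrite /prepend /=; case: b.
Qed.

Lemma exists_longest (P : seq word) : P != [::] ->
  exists2 a, a \in P & forall b, b \in P -> (size b <= size a).
Proof.
elim: P => // a P IH _; have [->|/IH[c Hc Hm]] := eqVneq P [::].
  by exists a; rewrite ?mem_head // => b; rewrite inE => /eqP ->.
case: (leqP (size a) (size c)) => H.
  by exists c; [rewrite inE Hc orbT | move=> b; rewrite inE => /orP[/eqP ->|/Hm]].
exists a; first exact: mem_head.
by move=> b; rewrite inE => /orP[/eqP ->//|/Hm/leq_trans]; apply; apply: ltnW.
Qed.

Lemma part_siblings {P} : part P -> (2 <= size P) ->
  exists e, rcons e false \in P /\ rcons e true \in P.
Proof.
move=> HP Hs; have [|a Ha Hmax] := exists_longest P; first by case: (P) Hs.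
case/lastP: a Ha Hmax => [Ha _|e b Ha Hmax].
  suff : (size P <= 1) by rewrite leqNgt Hs.
  apply: (@uniq_leq_size _ _ [:: [::]] (part_uniq HP)) => c Hc.
  rewrite inE; apply/negPn/negP => Hne.
  by have := part_disj HP Ha Hc; rewrite eq_sym Hne disj_nil => /(_ isT).
set s := rcons e (~~ b).
have [m Hm Hms] := part_cover HP (prepend s zero_seq).
have /prefix_rcons_cases[Es|Pe] : prefix m s.
- apply: inCyl_prefix_le Hms (inCyl_prepend _ _) _.
  by rewrite size_rcons -(size_rcons e b) Hmax.
- by rewrite Es /s in Hm; exists e; case: b Ha Hm {Hmax Hms s Es} => Ha Hm.
have Ema : m = rcons e b.
  have Pa := prefix_trans Pe (prefix_rcons e b).
  exact: part_eq HP Hm Ha (inCyl_prefix Pa (inCyl_prepend _ zero_seq)) (inCyl_prepend _ _).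
by have := size_prefix Pe; rewrite Ema size_rcons ltnn.
Qed.

Lemma disj_of_disj_children {m e} : disj m (rcons e false) -> disj m (rcons e true) -> m != e ->
  disj m e.
Proof.
move=> D0 D1 Hne; case D: (disj m e) => //; case/not_disj: (negbT D) => [Pme|/prefixP[r Em]].
  by move: D0; rewrite /disj (prefix_trans Pme (prefix_rcons e false)).
subst m; case: r {D} D0 D1 Hne => [|b r] D0 D1; rewrite ?cats0 ?eqxx // => _.
have Pb : prefix (rcons e b) (e ++ b :: r) by rewrite -cat_rcons prefix_prefix.
by case: b D0 D1 Pb => D0 D1 Pb; [move: D1 | move: D0]; rewrite /disj Pb /= andbF.
Qed.

Lemma part_merge {P e} : part P -> rcons e false \in P -> rcons e true \in P ->
  part (e :: rem (rcons e true) (rem (rcons e false) P)).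
Proof.
set e0 := rcons e false; set e1 := rcons e true => HP H0 H1.
have Hu := part_uniq HP; have Hu0 := rem_uniq e0 Hu.
have mem_rest m : m \in rem e1 (rem e0 P) = [&& m != e1, m != e0 & m \in P].
  by rewrite (mem_rem_uniq _ Hu0) inE (mem_rem_uniq _ Hu) inE.
have HeP : e \notin P.
  apply/negP => He; have Hne : e != e0 by apply/eqP => /(congr1 size); rewrite size_rcons; lia.
  by have := part_disj HP He H0 Hne; rewrite /disj prefix_rcons.
have disj_rest m : m \in rem e1 (rem e0 P) -> disj m e.
  rewrite mem_rest => /and3P[N1 N0 Hm]; apply: disj_of_disj_children.
  - exact: (part_disj HP Hm H0 N0).
  - exact: (part_disj HP Hm H1 N1).
  - by apply: contraNneq HeP => <-.
split.
- move=> x; have [m Hm Hx] := part_cover HP x.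
  have [E|N0] := eqVneq m e0; last have [E|N1] := eqVneq m e1.
  + by exists e; [exact: mem_head | apply: (inCyl_prefix (prefix_rcons e false)); rewrite -/e0 -E].
  + by exists e; [exact: mem_head | apply: (inCyl_prefix (prefix_rcons e true)); rewrite -/e1 -E].
  + by exists m; rewrite // inE mem_rest N0 N1 Hm orbT.
- rewrite /= rem_uniq // andbT; apply: contra HeP.
  by rewrite mem_rest => /and3P[].
- move=> p q; rewrite !inE => /predU1P[->|Hp] /predU1P[->|Hq] Hpq.
  + by rewrite eqxx in Hpq.
  + by rewrite disjC; apply: disj_rest.
  + exact: disj_rest.
  + by move: Hp Hq; rewrite !mem_rest => /and3P[_ _ Hp] /and3P[_ _ Hq]; apply: (part_disj HP Hp Hq).
Qed.

Lemma disj_sibling_cases {g0 g1} : disj g0 g1 -> exists h (b : bool),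
  (g0 = rcons h b /\ compat g1 (rcons h (~~ b))) \/ (g1 = rcons h b /\ compat g0 (rcons h (~~ b))).
Proof.
case/lastP: g0 => [|h0 b0]; first by rewrite disj_nil.
case/lastP: g1 => [|h1 b1] D; first by rewrite disjC disj_nil in D.
case C: (compat (rcons h1 b1) (rcons h0 (~~ b0))); first by exists h0, b0; left.
exists h1, b1; right; split=> //; apply: compat_disj.
have Ps : prefix (rcons h0 (~~ b0)) h1.
  move/negbT: C; rewrite /compat negb_or => /andP[Ne /not_disj[P|P]].
    case/prefix_rcons_cases: P Ne => [->|P]; first by rewrite eqxx.
    by move: D; rewrite /disj (prefix_trans P (prefix_rcons h0 b0)) andbF.
  by case/prefix_rcons_cases: P Ne => [->|//]; rewrite eqxx.
rewrite disjC; apply: disj_prefixl (prefix_trans Ps (prefix_rcons h1 _)) _.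
by rewrite disjC disj_sibling.
Qed.

Lemma disj_sibling_prefix {c h} {b : bool} : disj c (rcons h b) ->
  prefix (rcons h (~~ b)) c \/ disj c (rcons h (~~ b)).
Proof.
move=> D; case D': (disj c (rcons h (~~ b))); [by right | left].
case/not_disj: (negbT D') => // /prefix_rcons_cases[->|P]; first exact: prefix_refl.
by move: D; rewrite /disj (prefix_trans P (prefix_rcons h b)).
Qed.

Lemma tr_onto_sibling {g h} {b : bool} : disj (rcons h b) g -> compat g (rcons h (~~ b)) ->
  [/\ maps_cyl (tr g (rcons h (~~ b))) (rcons h b) (rcons h b),
      maps_cyl (tr g (rcons h (~~ b))) g (rcons h (~~ b)) &
      forall c, disj c (rcons h b) -> disj c g -> cylmap (tr g (rcons h (~~ b))) c].
Proof.
move=> D C; split=> [||c Db Dg]; first exact: tr_maps_cyl_out (disj_sibling h b).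
  by move=> y; rewrite tr_prependl.
by apply: tr_cylmap => //; [right | apply: disj_sibling_prefix].
Qed.

Lemma tr_onto_siblings {g0 g1} : disj g0 g1 -> exists a b h (o : bool), [/\ compat a b,
  maps_cyl (tr a b) g0 (rcons h o), maps_cyl (tr a b) g1 (rcons h (~~ o)) &
  forall c, disj c g0 -> disj c g1 -> cylmap (tr a b) c].
Proof.
move=> D; have [h [o [[E C]|[E C]]]] := disj_sibling_cases D; subst.
  have [H0 H1 Hc] := tr_onto_sibling D C.
  by exists g1, (rcons h (~~ o)), h, o; split.
rewrite disjC in D; have [H0 H1 Hc] := tr_onto_sibling D C.
exists g0, (rcons h (~~ o)), h, (~~ o); rewrite negbK; split=> // c D0 D1.
exact: Hc.
Qed.

Lemma maps_cyl_children {v e h} :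
  (forall b : bool, maps_cyl v (rcons e b) (rcons h b)) -> maps_cyl v e h.
Proof. by move=> H y; rewrite !(prepend_split_head _ y) H. Qed.

Lemma piecewise_merge {P v e} : piecewise v P -> rcons e false \in P -> rcons e true \in P ->
  exists a b (o : bool), [/\ compat a b, compat (rcons e false) (rcons e o) &
    piecewise (tr a b \o (v \o tr (rcons e false) (rcons e o)))
              (e :: rem (rcons e true) (rem (rcons e false) P))].
Proof.
case=> HP Hv Hc H0 H1; have [g0 Hg0] := Hc _ H0; have [g1 Hg1] := Hc _ H1.
have [a [b [h [o [Cab Ha0 Ha1 Hac]]]]] :=
  tr_onto_siblings (disj_maps_cyl (bij_inj Hv) (disj_sibling e false) Hg0 Hg1).
have Co : compat (rcons e false) (rcons e o).
  by case: o {Ha0 Ha1}; [apply/compat_disj/(disj_sibling e false) | apply: compat_refl].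
exists a, b, o; split=> //; split; first exact: part_merge.
  by apply: bij_comp (tr_bijective Cab) (bij_comp Hv (tr_bijective Co)).
move=> m; rewrite inE => /predU1P[->|].
  exists h; apply: maps_cyl_children => bt y /=.
  case: o Co Ha0 Ha1 => Co Ha0 Ha1; case: bt;
    by rewrite ?tr_id ?tr_prependl ?tr_prependr ?Hg0 ?Hg1 ?Ha0 ?Ha1.
rewrite (mem_rem_uniq _ (rem_uniq _ (part_uniq HP))) inE (mem_rem_uniq _ (part_uniq HP)) inE.
case/and3P=> N1 N0 Hm; have D0 := part_disj HP Hm H0 N0; have D1 := part_disj HP Hm H1 N1.
have [c Hmc] := Hc m Hm.
have [c' Hcc'] :=
  Hac c (disj_maps_cyl (bij_inj Hv) D0 Hmc Hg0) (disj_maps_cyl (bij_inj Hv) D1 Hmc Hg1).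
exists c' => y /=; rewrite (tr_maps_cyl_out D0) ?Hmc ?Hcc' //.
by case: (o).
Qed.

Lemma piecewise_single {P v} : piecewise v P -> (size P <= 1) -> v = id.
Proof.
case=> HP Hv Hc Hs; have [m Hm _] := part_cover HP zero_seq.
have Em : m = [::].
  apply: nil_of_cover => x; have [m' Hm' Hx] := part_cover HP x.
  by case: P Hs Hm Hm' {HP Hc} => [|p [|]] //; rewrite !inE => _ /eqP-> /eqP<-.
have [a' Ha'] := Hc _ Hm; rewrite Em in Ha'.
have Ea' : a' = [::].
  apply: nil_of_cover => x; rewrite -(vinvK Hv x) -(prepend_nil (vinv v x)) Ha'.
  exact: inCyl_prepend.
by apply: functional_extensionality => x; rewrite -(prepend_nil x) Ha' Ea'.
Qed.

Definition Q2_prepend a p : Q2 := exist _ (prepend a (sval p)) (proj2 (isQ2_prepend a _) (svalP p)).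

Definition Q2_zero : Q2 := exist _ zero_seq (ex_intro _ 0 (fun _ _ => erefl)).

Lemma Q2_prepend_cat a b p : Q2_prepend (a ++ b) p = Q2_prepend a (Q2_prepend b p).
Proof. by apply: Q2_eq; rewrite /= prepend_cat. Qed.

Lemma Q2_prepend_zeros n : Q2_prepend (nseq n false) Q2_zero = Q2_zero.
Proof.
apply: Q2_eq; apply: functional_extensionality => i.
by rewrite /= /prepend nth_nseq size_nseq; case: ltnP.
Qed.

Lemma Q2_prepend_zero_onto p n : exists2 r, (n <= size r) & p = Q2_prepend r Q2_zero.
Proof.
case: (svalP p) => N HN; exists (mkseq (sval p) (maxn N n)); first by rewrite size_mkseq leq_maxr.
apply: Q2_eq; apply: functional_extensionality => i; rewrite /= /prepend size_mkseq.
by case: ltnP => Hi; rewrite ?nth_mkseq // HN // (leq_trans (leq_maxl N n)).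
Qed.

Lemma Q2_cases a b p :
  (exists t, p = Q2_prepend a t) \/ (exists t, p = Q2_prepend b t) \/
  (~ inCyl a (sval p) /\ ~ inCyl b (sval p)).
Proof.
have split_at w : inCyl w (sval p) -> exists t, p = Q2_prepend w t.
  move=> Hw; have Ht : isQ2 (shift (sval p) (size w)).
    by apply/(isQ2_prepend w); rewrite prepend_shift //; apply: svalP.
  by exists (exist _ _ Ht); apply: Q2_eq; rewrite /= prepend_shift.
case: (boolP (mkseq (sval p) (size a) == a)) => [/eqP/inCylP/split_at|/eqP Ha].
  by left.
case: (boolP (mkseq (sval p) (size b) == b)) => [/eqP/inCylP/split_at|/eqP Hb].
  by right; left.
by right; right; split=> /inCylP.
Qed.

Lemma actQ_tr_prependl {a b} t : compat a b ->
  actQ (vinv (tr a b)) (Q2_prepend a t) = Q2_prepend b t.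
Proof. by move=> C; apply: Q2_eq; rewrite (actQ_vinv _ (tr_inV C)) vinv_tr //= tr_prependl. Qed.

Lemma actQ_tr_out {a b} p : compat a b -> ~ inCyl a (sval p) -> ~ inCyl b (sval p) ->
  actQ (vinv (tr a b)) p = p.
Proof. by move=> C Ha Hb; apply: Q2_eq; rewrite (actQ_vinv _ (tr_inV C)) vinv_tr // tr_out. Qed.

Lemma disj_mkseq {a x} N : ~ inCyl a x -> (size a <= N) -> disj (mkseq x N) a.
Proof.
move=> Ha HN; have := @prefix_or_disj a (mkseq x N); rewrite size_mkseq => /(_ HN)[P|//].
by case: Ha; apply: inCyl_prefix P (inCyl_mkseq x N).
Qed.

Lemma notin_rcons_flip x N : ~ inCyl (rcons (mkseq x N) (~~ x N)) x.
Proof.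
move/(_ N); rewrite size_rcons size_mkseq nth_rcons size_mkseq ltnn eqxx => /(_ (ltnSn N)).
by case: (x N).
Qed.

End CantorSpace.

Local Open Scope ring_scope.

Lemma twist_id {L : zmodType} (f : Q2 -> L) : twist id f = f.
Proof.
apply: functional_extensionality => p; rewrite /twist; congr f; apply: Q2_eq.
by rewrite actQ_vinv ?vinvK' //; [exists id | apply: inV_id].
Qed.

Lemma Coc_czero {L : zmodType} : Coc (czero L).
Proof.
split=> // v w _ _; apply: functional_extensionality => p.
by rewrite /czero /twist addr0.
Qed.

Lemma Coc_cadd {L : zmodType} {c d : cochain L} : Coc c -> Coc d -> Coc (cadd c d).
Proof.
move=> [Hc1 Hc2] [Hd1 Hd2]; split=> [v w Hv Hw|v Hv]; apply: functional_extensionality => p.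
  by rewrite /cadd Hc1 // Hd1 // /twist addrACA.
by rewrite /cadd Hc2 // Hd2 // addr0.
Qed.

Lemma Coc_copp {L : zmodType} {c : cochain L} : Coc c -> Coc (copp c).
Proof.
move=> [Hc1 Hc2]; split=> [v w Hv Hw|v Hv]; apply: functional_extensionality => p.
  by rewrite /copp Hc1 // /twist opprD.
by rewrite /copp Hc2 // oppr0.
Qed.

Lemma subr_add_shifts {L : zmodType} (x y u v w : L) :
  x - y = (v - u) + (x + (u + w)) - (y + (v + w)).
Proof. by rewrite addrCA -addrA subrKA [y + _]addrC opprD [v + w + _]addrA subrr add0r. Qed.

Section Cocycle.
Context {L : zmodType} (c : cochain L).
Implicit Types (a b d r : word) (p t : Q2).
Hypothesis Hc : Coc c.

Lemma Coc_comp_apply {v w} p : inV v -> inV w -> c (v \o w) p = c v p + c w (actQ (vinv v) p).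
Proof. by move=> Hv Hw; rewrite (proj1 Hc v w Hv Hw). Qed.

Lemma Coc_id : c id = fun=> 0.
Proof.
apply: functional_extensionality => p; have := Coc_comp_apply p inV_id inV_id.
rewrite -/(twist id (c id) p) twist_id => E.
by apply/esym/(addrI (c id p)); rewrite addr0 -E.
Qed.

Lemma Coc_cancel {u v w} : inV u -> inV v -> inV w -> c u = (fun=> 0) -> c w = (fun=> 0) ->
  c (u \o (v \o w)) = (fun=> 0) -> c v = (fun=> 0).
Proof.
move=> Hu Hv Hw Cu Cw Cuvw; apply: functional_extensionality => p.
move/(congr1 (fun f => f (actQ u p))): Cuvw.
rewrite (Coc_comp_apply _ Hu (inV_comp Hv Hw)) (Coc_comp_apply _ Hv Hw) Cu Cw actQ_vinvK //.
by rewrite add0r addr0.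
Qed.

Section Generation.
Hypothesis Htr : forall a b, disj a b -> c (tr a b) = fun=> 0.

Lemma Coc_tr_compat {a b} : compat a b -> c (tr a b) = fun=> 0.
Proof. by case/orP=> [/eqP ->|/Htr //]; rewrite tr_id Coc_id. Qed.

Lemma Coc_zero_piecewise {P v} : piecewise v P -> c v = fun=> 0.
Proof.
(* Induction on the number of pieces: composing with transpositions merges two siblings. *)
have [n] := ubnP (size P); elim: n P v => // n IH P v; rewrite ltnS => Hn Hpw.
have [Hs|Hs] := leqP (size P) 1; first by rewrite (piecewise_single Hpw Hs) Coc_id.
case: (Hpw) => HP _ _; have [e [H0 H1]] := part_siblings HP Hs.
have [a [b [o [Cab Co Hu]]]] := piecewise_merge Hpw H0 H1.
apply: (Coc_cancel (tr_inV Cab) (inV_of_piecewise Hpw) (tr_inV Co)); rewrite ?Coc_tr_compat //.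
apply: IH Hu; rewrite (leq_trans _ Hn) //= size_rem; last first.
  by rewrite (mem_rem_uniq _ (part_uniq HP)) inE H1 andbT; apply/eqP => /rcons_inj.
by rewrite size_rem //; case: (size P) Hs => [|[|k]].
Qed.

Lemma Coc_zero_of_tr_zero {v} : inV v -> c v = fun=> 0.
Proof. by case/piecewise_of_inV=> P /Coc_zero_piecewise. Qed.

End Generation.

Lemma Coc_tr_invol {a b} p : compat a b ->
  c (tr a b) p + c (tr a b) (actQ (vinv (tr a b)) p) = 0.
Proof.
move=> C; have E : tr a b \o tr a b = id by apply: functional_extensionality; apply: tr_invol.
by rewrite -(Coc_comp_apply _ (tr_inV C) (tr_inV C)) E Coc_id.
Qed.

Section AwayFromPoint.
Variable p : Q2.

Definition away a b := [/\ disj a b, ~ inCyl a (sval p) & ~ inCyl b (sval p)].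

Lemma awayC {a b} : away a b -> away b a.
Proof. by case=> D Ha Hb; split=> //; rewrite disjC. Qed.

Lemma away_fix {a b} : away a b -> actQ (vinv (tr a b)) p = p.
Proof. by case=> D Ha Hb; apply: actQ_tr_out => //; apply: compat_disj. Qed.

Lemma Coc_tr_away_comm {a b} : away a b -> c (tr a b) p = c (tr b a) p.
Proof. by case=> D _ _; rewrite tr_comm ?compat_disj. Qed.

Lemma Coc_tr_away_conj {a b z} : away a b -> away a z -> away b z ->
  c (tr a z) p = c (tr a b) p.
Proof.
move=> Aab Aaz Abz; have [Dab _ _] := Aab; have [Daz _ _] := Aaz; have [Dbz _ _] := Abz.
have twice : c (tr b z) p + c (tr b z) p = 0.
  by have := Coc_tr_invol p (compat_disj Dbz); rewrite away_fix.
have Vab := tr_inV (compat_disj Dab); have Vbz := tr_inV (compat_disj Dbz).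
rewrite (tr_conj Dab Daz Dbz) (Coc_comp_apply _ Vbz (inV_comp Vab Vbz)) (away_fix Abz).
by rewrite (Coc_comp_apply _ Vab Vbz) (away_fix Aab) addrCA twice addr0.
Qed.

Lemma Coc_tr_away_split {a b} : away a b -> c (tr a b) p =
  c (tr (rcons a false) (rcons b false)) p + c (tr (rcons a true) (rcons b true)) p.
Proof.
case=> D Ha Hb; have A0 : away (rcons a false) (rcons b false).
  by split; [apply: disj_rcons | apply: notin_prefix (prefix_rcons _ _) _..].
have V0 := tr_inV (compat_disj (disj_rcons false false D)).
have V1 := tr_inV (compat_disj (disj_rcons true true D)).
by rewrite (tr_split D) (Coc_comp_apply _ V0 V1) (away_fix A0).
Qed.

Lemma Coc_tr_away_rcons {a b} (i : bool) : away a b ->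
  c (tr (rcons a i) (rcons b i)) p = c (tr a b) p.
Proof.
(* Three conjugations through a word [z] disjoint from [a], [b], [a'], [b'] and away from [p]. *)
move=> Aab; have [D Ha Hb] := Aab; set x := sval p in Ha Hb.
set N := (size a + size b).+1; set z := rcons (mkseq x N) (~~ x N).
set a' := rcons a i; set b' := rcons b i.
have Hz : ~ inCyl z x := notin_rcons_flip x N.
have Ha' : ~ inCyl a' x := notin_prefix (prefix_rcons a i) Ha.
have Hb' : ~ inCyl b' x := notin_prefix (prefix_rcons b i) Hb.
have Dz w : ~ inCyl w x -> (size w <= N)%N -> disj w z.
  by move=> Hw HwN; rewrite disjC; apply/disj_rconsl/disj_mkseq.
have Aaz : away a z by split=> //; apply: Dz => //; rewrite /N; lia.
have Abz : away b z by split=> //; apply: Dz => //; rewrite /N; lia.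
have Aa'z : away a' z by split=> //; apply: Dz; rewrite // /a' size_rcons /N; lia.
have Ab'z : away b' z by split=> //; apply: Dz; rewrite // /b' size_rcons /N; lia.
have Ab'a : away b' a by split=> //; rewrite disjC in D; apply: disj_rconsl.
have Ab'a' : away b' a' by split=> //; rewrite disjC in D; apply: disj_rcons.
rewrite -(Coc_tr_away_conj Aab Aaz Abz) (Coc_tr_away_comm Aaz).
rewrite (Coc_tr_away_conj (awayC Ab'z) (awayC Aaz) Ab'a) (Coc_tr_away_comm (awayC Ab'z)).
by rewrite (Coc_tr_away_conj Ab'a' Ab'z Aa'z) (Coc_tr_away_comm Ab'a').
Qed.

End AwayFromPoint.

Lemma Coc_tr_out {a b} p : disj a b -> ~ inCyl a (sval p) -> ~ inCyl b (sval p) ->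
  c (tr a b) p = 0.
Proof.
(* The value is the sum of the values of the two half swaps, each of which equals it. *)
move=> D Ha Hb; have A : away p a b by [].
have := Coc_tr_away_split p A; rewrite !(Coc_tr_away_rcons p) // => E.
by apply: (addIr (c (tr a b) p)); rewrite add0r -E.
Qed.

Definition ctr a b t := c (tr a b) (Q2_prepend a t).

Lemma ctr_refl a t : ctr a a t = 0.
Proof. by rewrite /ctr tr_id Coc_id. Qed.

Lemma ctr_anti {a b} t : compat a b -> ctr b a t = - ctr a b t.
Proof.
move=> C; have := Coc_tr_invol (Q2_prepend a t) C; rewrite actQ_tr_prependl // => E.
by rewrite /ctr -(tr_comm C); apply/eqP; rewrite -addr_eq0 addrC E.
Qed.

Lemma ctr_trans_disj {a b d} t : disj a b -> disj a d -> disj b d ->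
  ctr a d t = ctr a b t + ctr b d t.
Proof.
move=> Dab Dad Dbd; have Vab := tr_inV (compat_disj Dab); have Vbd := tr_inV (compat_disj Dbd).
have Hb := disj_prepend (sval t) Dab; have Hd := disj_prepend (sval t) Dad.
rewrite /ctr (tr_conj Dab Dad Dbd) (Coc_comp_apply _ Vbd (inV_comp Vab Vbd)).
rewrite (Coc_tr_out (Q2_prepend a t) Dbd Hb Hd) add0r.
rewrite (actQ_tr_out (Q2_prepend a t) (compat_disj Dbd) Hb Hd).
by rewrite (Coc_comp_apply _ Vab Vbd) actQ_tr_prependl ?compat_disj.
Qed.

Lemma ctr_trans {a b d} t : compat a b -> compat a d -> compat b d ->
  ctr a d t = ctr a b t + ctr b d t.
Proof.
case/orP=> [/eqP <-|Dab]; first by rewrite ctr_refl add0r.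
case/orP=> [/eqP <-|Dad]; first by rewrite ctr_refl => C; rewrite (ctr_anti _ C) addNr.
case/orP=> [/eqP <-|Dbd]; first by rewrite ctr_refl addr0.
exact: ctr_trans_disj.
Qed.

Lemma ctr_rcons {a b} (i : bool) t : disj a b ->
  ctr a b (Q2_prepend [:: i] t) = ctr (rcons a i) (rcons b i) t.
Proof.
move=> D; have C0 := compat_disj (disj_rcons false false D).
have C1 := compat_disj (disj_rcons true true D).
rewrite /ctr -Q2_prepend_cat cats1 (tr_split D) (Coc_comp_apply _ (tr_inV C0) (tr_inV C1)).
case: i.
  have H0 : ~ inCyl (rcons a false) (prepend (rcons a true) (sval t)).
    by apply: disj_prepend; apply: disj_sibling a true.
  have H1 : ~ inCyl (rcons b false) (prepend (rcons a true) (sval t)).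
    by apply: disj_prepend; apply: disj_rcons.
  set p := Q2_prepend (rcons a true) t.
  by rewrite (Coc_tr_out p (disj_rcons false false D) H0 H1) (actQ_tr_out p C0 H0 H1) add0r.
have H0 : ~ inCyl (rcons a true) (prepend (rcons b false) (sval t)).
  by apply: disj_prepend; apply: disj_rcons; rewrite disjC.
have H1 : ~ inCyl (rcons b true) (prepend (rcons b false) (sval t)).
  by apply: disj_prepend; apply: disj_sibling b false.
set p := Q2_prepend (rcons b false) t.
by rewrite actQ_tr_prependl // (Coc_tr_out p (disj_rcons true true D) H0 H1) addr0.
Qed.

Lemma ctr_cat {a b} r t : disj a b -> ctr a b (Q2_prepend r t) = ctr (a ++ r) (b ++ r) t.
Proof.
elim: r a b => [|i r IH] a b D.
  by rewrite !cats0 /ctr /Q2_prepend; congr c; apply: Q2_eq; rewrite /= prepend_nil.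
rewrite -cat1s Q2_prepend_cat ctr_rcons // IH ?disj_rcons //.
by rewrite -!cats1 -!catA.
Qed.

Definition ctr0 a b := ctr a b Q2_zero.

Definition r00 : word := [:: false; false].

Definition sep2 a b : word := [:: ~~ nth false a 0; ~~ nth false b 1].

Lemma disj_sep2l {a} b : (0 < size a)%N -> disj a (sep2 a b).
Proof. by move=> Ha; apply: (disj_nth 0) => //=; case: (nth false a 0). Qed.

Lemma disj_sep2r a {b} : (1 < size b)%N -> disj b (sep2 a b).
Proof. by move=> Hb; apply: (disj_nth 1) => //=; case: (nth false b 1). Qed.

Definition pot a := ctr0 a (sep2 a r00) + ctr0 (sep2 a r00) r00.

Lemma pot_spec {a r} : size r = 2 -> disj a r -> pot a = ctr0 a r + ctr0 r r00.
Proof.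
move=> Hr D; have Ha : (0 < size a)%N by case: a D => //; rewrite disj_nil.
have C2 s s' : size s = 2 -> size s' = 2 -> compat s s'.
  by move=> Hs Hs'; apply: compat_eq_size; rewrite Hs Hs'.
set r' := sep2 a r00; have Cr : compat r r' by apply: C2.
rewrite /pot /ctr0 -/r' (ctr_trans _ (compat_disj D) (compat_disj (disj_sep2l r00 Ha)) Cr).
by rewrite -addrA -(ctr_trans _ Cr (C2 r r00 Hr erefl) (C2 r' r00 erefl erefl)).
Qed.

Lemma ctr0_pot {a b} : (1 < size a)%N -> (1 < size b)%N -> disj a b -> ctr0 a b = pot a - pot b.
Proof.
move=> Ha Hb D; set r := sep2 a b.
have Dar : disj a r by apply: disj_sep2l; apply: ltnW.
have Dbr : disj b r by apply: disj_sep2r.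
rewrite (pot_spec _ Dar) // (pot_spec _ Dbr) // [ctr0 b r + _]addrC addrKA /ctr0.
have Crb : compat r b by rewrite compatC compat_disj.
by rewrite (ctr_trans _ (compat_disj Dar) (compat_disj D) Crb) (ctr_anti _ (compat_disj Dbr)).
Qed.

Lemma pot_drift_disj {a b} : (1 < size a)%N -> (1 < size b)%N -> disj a b ->
  pot a - pot (rcons a false) = pot b - pot (rcons b false).
Proof.
move=> Ha Hb D; have Hz : Q2_prepend [:: false] Q2_zero = Q2_zero := Q2_prepend_zeros 1.
have E : pot a - pot b = pot (rcons a false) - pot (rcons b false).
  rewrite -!ctr0_pot ?size_rcons ?disj_rcons // 1?ltnW //.
  by rewrite /ctr0 -ctr_rcons // Hz.
by rewrite -[pot a](subrK (pot b)) E addrAC [pot _ - _ - _]addrAC subrr add0r addrC.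
Qed.

(* By [pot_drift_disj] the drift [pot a - pot (rcons a false)] does not depend on [a]. *)
Definition zeta := pot r00 - pot (rcons r00 false).

Lemma pot_rcons0 {a} : (1 < size a)%N -> pot (rcons a false) = pot a - zeta.
Proof.
move=> Ha; set r := sep2 a r00.
have Dar : disj a r by apply: disj_sep2l; apply: ltnW.
have Dr0 : disj r00 r by apply: disj_sep2r.
have -> : zeta = pot a - pot (rcons a false).
  by rewrite /zeta (pot_drift_disj _ _ Dr0) // (pot_drift_disj Ha _ Dar).
by rewrite opprB addrCA subrr addr0.
Qed.

(* The term [zeta *+ size a] compensates the drift: [fpot_word a] only depends on [a 000...]. *)
Definition fpot_word a := pot a + zeta *+ size a.

Lemma fpot_word_zeros {a} k : (1 < size a)%N -> fpot_word (a ++ nseq k false) = fpot_word a.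
Proof.
move=> Ha; elim: k => [|k IH]; first by rewrite cats0.
rewrite -addn1 nseqD catA cats1 /fpot_word pot_rcons0 ?size_cat 1?(leq_trans Ha) ?leq_addr //.
by rewrite size_rcons mulrS subrKA.
Qed.

Lemma fpot_word_eq {a b} : (1 < size a)%N -> (1 < size b)%N ->
  prepend a zero_seq = prepend b zero_seq -> fpot_word a = fpot_word b.
Proof.
wlog Hab : a b / (size a <= size b)%N.
  move=> W Ha Hb E; case: (leqP (size a) (size b)) => H; first exact: W.
  by symmetry; apply: W => //; apply: ltnW.
move=> Ha Hb E; suff -> : b = a ++ nseq (size b - size a) false by rewrite fpot_word_zeros.
apply: (@eq_from_nth _ false); first by rewrite size_cat size_nseq subnKC.
move=> i Hi; have := congr1 (fun f => f i) E; rewrite /prepend Hi nth_cat nth_nseq.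
by case: ltnP => //; case: ltnP.
Qed.

Definition fpot p :=
  fpot_word (epsilon (inhabits [::]) (fun r => (1 < size r)%N /\ p = Q2_prepend r Q2_zero)).

Lemma fpot_spec {a} : (1 < size a)%N -> fpot (Q2_prepend a Q2_zero) = fpot_word a.
Proof.
move=> Ha; rewrite /fpot; set P := fun r => _.
have [|Hr E] := epsilon_spec (inhabits [::]) P; first by exists a.
by apply: fpot_word_eq => //; move: (congr1 sval E).
Qed.

Lemma Coc_tr_formula {a b} t : disj a b -> c (tr a b) (Q2_prepend a t) =
  zeta *~ ((size b)%:Z - (size a)%:Z) + fpot (Q2_prepend a t) - fpot (Q2_prepend b t).
Proof.
move=> D; have [r Hr ->] := Q2_prepend_zero_onto t 2.
have Har : (1 < size (a ++ r))%N by rewrite size_cat (leq_trans Hr) ?leq_addl.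
have Hbr : (1 < size (b ++ r))%N by rewrite size_cat (leq_trans Hr) ?leq_addl.
rewrite -[c _ _]/(ctr a b _) ctr_cat // -/(ctr0 _ _) (ctr0_pot Har Hbr (disj_cat r r D)).
rewrite -!Q2_prepend_cat !fpot_spec // /fpot_word !size_cat !mulrnDr mulrzBl_nat -!pmulrn.
exact: subr_add_shifts.
Qed.

End Cocycle.

Section Coboundaries.
Context {L : zmodType}.
Implicit Types (z : L) (f : Q2 -> L) (a b : word) (p t : Q2).

Lemma s_inV z {v} p : inV v -> s z v p = z *~ logslope v (vinv v (sval p)).
Proof.
move=> Hv; rewrite /s; case: excluded_middle_informative => [H|H]; last by [].
by rewrite actQ_vinv.
Qed.

Lemma Coc_s z : Coc (s z).
Proof.
split=> [v w Hv Hw|v Hv]; apply: functional_extensionality => p; last first.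
  by rewrite /s; case: excluded_middle_informative.
rewrite /twist (s_inV _ _ (inV_comp Hv Hw)) (s_inV _ _ Hv) (s_inV _ _ Hw) actQ_vinv //.
rewrite (vinv_comp (inV_bijective Hv) (inV_bijective Hw)).
by rewrite (logslope_comp _ Hv Hw) /= (vinvK (inV_bijective Hw)) mulrzDr.
Qed.

Lemma s_tr_prependl z {a b} t : compat a b ->
  s z (tr a b) (Q2_prepend a t) = z *~ ((size b)%:Z - (size a)%:Z).
Proof.
move=> C; rewrite (s_inV _ _ (tr_inV C)) (vinv_tr C) /= tr_prependl.
by rewrite (logslope_maps_cyl (inCyl_prepend b _) (fun y => tr_prependr y C)).
Qed.

Lemma s_tr_out z {a b} p : compat a b -> ~ inCyl a (sval p) -> ~ inCyl b (sval p) ->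
  s z (tr a b) p = 0.
Proof.
move=> C Ha Hb; rewrite (s_inV _ _ (tr_inV C)) (vinv_tr C) (tr_out Ha Hb).
set N := (size a + size b)%N.
have Da : disj (mkseq (sval p) N) a by apply: disj_mkseq => //; lia.
have Db : disj (mkseq (sval p) N) b by apply: disj_mkseq => //; lia.
by rewrite (logslope_maps_cyl (inCyl_mkseq _ N) (tr_maps_cyl_out Da Db)) subrr mulr0z.
Qed.

Definition cobound z f : cochain L := fun v =>
  if excluded_middle_informative (inV v) then fun p => s z v p + f p - twist v f p else fun=> 0.

Lemma cobound_inV z f {v} : inV v -> cobound z f v = fun p => s z v p + f p - twist v f p.
Proof. by rewrite /cobound; case: excluded_middle_informative. Qed.

Lemma Coc_cobound z f : Coc (cobound z f).
Proof.
split=> [v w Hv Hw|v Hv]; last by rewrite /cobound; case: excluded_middle_informative.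
rewrite (cobound_inV _ _ (inV_comp Hv Hw)) (cobound_inV _ _ Hv) (cobound_inV _ _ Hw).
apply: functional_extensionality => p.
rewrite /twist (proj1 (Coc_s z) v w Hv Hw) /twist (actQ_vinv_comp _ Hv Hw).
set A := s z v p; set B := s z w _; set F1 := f (actQ (vinv v) p).
by rewrite [B + F1]addrC -[F1 + B - _]addrA subrKA [RHS]addrA [A + B + _]addrAC.
Qed.

Lemma rep_cobound {c : cochain L} {z f} : Coc c -> rep c z f <-> c = cobound z f.
Proof.
move=> Hc; split=> [R|-> v Hv]; last exact: cobound_inV.
apply: functional_extensionality => v; case: (classic (inV v)) => Hv.
  by rewrite R // cobound_inV.
by rewrite (proj2 Hc v Hv) /cobound; case: excluded_middle_informative.
Qed.

Lemma cobound_tr_prependl z f {a b} t : disj a b ->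
  cobound z f (tr a b) (Q2_prepend a t) =
  z *~ ((size b)%:Z - (size a)%:Z) + f (Q2_prepend a t) - f (Q2_prepend b t).
Proof.
move=> D; have C := compat_disj D.
by rewrite (cobound_inV _ _ (tr_inV C)) /= s_tr_prependl // /twist actQ_tr_prependl.
Qed.

Lemma cobound_tr_out z f {a b} p : disj a b -> ~ inCyl a (sval p) -> ~ inCyl b (sval p) ->
  cobound z f (tr a b) p = 0.
Proof.
move=> D Ha Hb; have C := compat_disj D.
by rewrite (cobound_inV _ _ (tr_inV C)) /= s_tr_out // /twist actQ_tr_out // add0r subrr.
Qed.

End Coboundaries.

Section Classification.
Context {L : zmodType}.
Implicit Types (z : L) (f : Q2 -> L) (a b : word) (p t : Q2).

Lemma sD z1 z2 v p : s (z1 + z2) v p = s z1 v p + s z2 v p.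
Proof. by rewrite /s; case: excluded_middle_informative => H; rewrite ?mulrzDl ?addr0. Qed.

Lemma sN z v p : s (- z) v p = - s z v p.
Proof. by rewrite /s; case: excluded_middle_informative => H; rewrite ?mulNrz ?oppr0. Qed.

Lemma coboundD z1 z2 f1 f2 :
  cobound (z1 + z2) (fun p => f1 p + f2 p) = cadd (cobound z1 f1) (cobound z2 f2).
Proof.
apply: functional_extensionality => v; apply: functional_extensionality => p.
rewrite /cadd /cobound; case: excluded_middle_informative => H; last by rewrite addr0.
by rewrite /= sD /twist opprD (addrACA (s z1 v p)) [LHS]addrACA.
Qed.

Lemma coboundN z f : cobound (- z) (fun p => - f p) = copp (cobound z f).
Proof.
apply: functional_extensionality => v; apply: functional_extensionality => p.
rewrite /copp /cobound; case: excluded_middle_informative => H; last by rewrite oppr0.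
by rewrite /= sN /twist !opprD opprK.
Qed.

Lemma cobound_shift z f k : cobound z (fun p => f p + k) = cobound z f.
Proof.
apply: functional_extensionality => v; rewrite /cobound /twist.
case: excluded_middle_informative => // H; apply: functional_extensionality => p.
by rewrite addrA opprD addrACA subrr addr0.
Qed.

Lemma rep_exists (c : cochain L) : Coc c -> rep c (zeta c) (fpot c).
Proof.
move=> Hc; set d := cadd c (copp (cobound (zeta c) (fpot c))).
have Hd : Coc d := Coc_cadd Hc (Coc_copp (Coc_cobound _ _)).
have Ka a b t : disj a b ->
    c (tr a b) (Q2_prepend a t) = cobound (zeta c) (fpot c) (tr a b) (Q2_prepend a t).
  by move=> D; rewrite Coc_tr_formula // cobound_tr_prependl.
have Dtr a b : disj a b -> d (tr a b) = fun=> 0.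
  move=> D; apply: functional_extensionality => p; rewrite /d /cadd /copp.
  case: (Q2_cases a b p) => [[t ->]|[[t ->]|[Ha Hb]]]; first by rewrite Ka // subrr.
    by rewrite (tr_comm (compat_disj D)) Ka 1?disjC // subrr.
  by rewrite (Coc_tr_out _ Hc _ D Ha Hb) cobound_tr_out // subrr.
move=> v Hv; rewrite -cobound_inV //; apply: functional_extensionality => p.
move: (congr1 (fun g => g p) (Coc_zero_of_tr_zero _ Hd Dtr Hv)).
by rewrite /d /cadd /copp /= => /eqP; rewrite subr_eq0 => /eqP.
Qed.

Lemma cobound_kernel {z f} : (forall v, inV v -> cobound z f v = fun=> 0) ->
  z = 0 /\ f = fun=> f Q2_zero.
Proof.
move=> H0; have key a b t : disj a b ->
    z *~ ((size b)%:Z - (size a)%:Z) + f (Q2_prepend a t) - f (Q2_prepend b t) = 0.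
  by move=> D; rewrite -cobound_tr_prependl // H0 //; apply/tr_inV/compat_disj.
have E0 : Q2_prepend [:: false] Q2_zero = Q2_zero := Q2_prepend_zeros 1.
set q := Q2_prepend [:: true] Q2_zero.
have Eq : f q = f Q2_zero.
  by apply/eqP; rewrite -subr_eq0 -(key [:: true] [:: false] Q2_zero) // E0 subrr mulr0z add0r.
have Ez : z = 0.
  have := key [:: false] [:: true; false] Q2_zero isT.
  by rewrite E0 -[[:: true; false]]/([:: true] ++ [:: false]) Q2_prepend_cat E0 -/q Eq addrK.
split=> //; apply: functional_extensionality => p; have [r _ ->] := Q2_prepend_zero_onto p 0.
have [->|Nr] := eqVneq r (nseq (size r) false); first by rewrite Q2_prepend_zeros.
have := key r _ Q2_zero (disj_eq_size (esym (size_nseq _ _)) Nr).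
by rewrite Ez mul0rz add0r Q2_prepend_zeros => /eqP; rewrite subr_eq0 => /eqP.
Qed.

Lemma rep_uniq {c : cochain L} {z f z' f'} : rep c z f -> rep c z' f' ->
  z' = z /\ exists k : L, f' = fun p => f p + k.
Proof.
move=> R R'; have [] := @cobound_kernel (z' - z) (fun p => f' p - f p).
  move=> v Hv; rewrite coboundD coboundN; apply: functional_extensionality => p.
  rewrite /cadd /copp !(cobound_inV _ _ Hv) /=.
  move: (congr1 (fun g => g p) (R v Hv)) (congr1 (fun g => g p) (R' v Hv)) => /= <- <-.
  exact: subrr.
move/eqP; rewrite subr_eq0 => /eqP -> Ef; split=> //; exists (f' Q2_zero - f Q2_zero).
apply: functional_extensionality => p; have := congr1 (fun g => g p) Ef.
by rewrite /= => <-; rewrite addrC subrK.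
Qed.

Definition cocycle_params (c : cochain L) : L * (Q2 -> L) :=
  epsilon (inhabits (0, fun=> 0)) (fun zf : L * (Q2 -> L) => rep c zf.1 zf.2).

Lemma rep_cocycle_params {c : cochain L} : Coc c -> rep c (cocycle_params c).1 (cocycle_params c).2.
Proof.
move=> Hc; apply: (epsilon_spec _ (fun zf : L * (Q2 -> L) => rep c zf.1 zf.2)).
by exists (zeta c, fpot c); apply: rep_exists.
Qed.

Lemma cobound_cocycle_params {c : cochain L} : Coc c ->
  c = cobound (cocycle_params c).1 (cocycle_params c).2.
Proof. by move=> Hc; apply/(rep_cobound Hc)/rep_cocycle_params. Qed.

Lemma eqmod_cocycle_params {c : cochain L} {z f} : Coc c -> rep c z f ->
  eqmod (cocycle_params c) (z, f).
Proof. by move=> Hc R; have [-> Ea] := rep_uniq (rep_cocycle_params Hc) R. Qed.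

End Classification.

Theorem mainTheorem16 (L : zmodType) :
  (* (1) Coc is a subgroup of the abelian group of cochains (pointwise product) *)
  (Coc (czero L) /\
   (forall c d : cochain L, Coc c -> Coc d -> Coc (cadd c d)) /\
   (forall c : cochain L, Coc c -> Coc (copp c))) /\
  (* (2) *)
  (forall zeta : L, Coc (s zeta)) /\
  (* (3) *)
  (forall c : cochain L, Coc c ->
     exists (zeta : L) (f : Q2 -> L), rep c zeta f /\
       forall (zeta' : L) (f' : Q2 -> L), rep c zeta' f' ->
         zeta' = zeta /\ exists a : L, f' = (fun x => f x + a)) /\
  (* (4) *)
  (exists Phi : cochain L -> L * (Q2 -> L),
     (forall c, Coc c -> rep c (Phi c).1 (Phi c).2) /\
     (forall c d, Coc c -> Coc d -> eqmod (Phi (cadd c d)) (padd (Phi c) (Phi d))) /\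
     (forall c d, Coc c -> Coc d -> eqmod (Phi c) (Phi d) -> c = d) /\
     (forall p : L * (Q2 -> L), exists c, Coc c /\ eqmod (Phi c) p)).
Proof.
split.
  split; first exact: Coc_czero.
  by split=> [c d|c]; [apply: Coc_cadd | apply: Coc_copp].
split; first exact: Coc_s.
split.
  move=> c Hc; exists (zeta c), (fpot c); split; first exact: rep_exists.
  by move=> z' f'; apply: rep_uniq (rep_exists _ Hc).
exists cocycle_params; split; first by move=> c; apply: rep_cocycle_params.
split.
  move=> c d Hc Hd; have Hcd := Coc_cadd Hc Hd; apply/(eqmod_cocycle_params Hcd)/(rep_cobound Hcd).
  by rewrite coboundD -(cobound_cocycle_params Hc) -(cobound_cocycle_params Hd).
split.
  move=> c d Hc Hd [E [k Ek]].
  by rewrite (cobound_cocycle_params Hc) (cobound_cocycle_params Hd) -E Ek cobound_shift.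
move=> [z f]; have Hzf := Coc_cobound z f; exists (cobound z f); split=> //.
exact/(eqmod_cocycle_params Hzf)/(rep_cobound Hzf).
Qed.
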